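(* Let $X,Y$ be finite sets. If $A\in\mathbb{Z}^{X\times Y}$ has only nonnegative entries, then $$\operatorname{block}(A)\le\max_{x\in X}\sum_{y\in Y}|A(x,y)| .$$ More generally, every $A\in\mathbb{Z}^{X\times Y}$ satisfies $$\operatorname{block}(A)\le 2\max_{x\in X}\sum_{y\in Y}|A(x,y)| .$$
   Context: A boolean matrix $B\in\{0,1\}^{X\times Y}$ is blocky if there exist families $\{S_i\}$ of pairwise disjoint subsets of $X$ and $\{T_i\}$ of pairwise disjoint subsets of $Y$ such that the support of $B$ equals $\bigcup_i S_i\times T_i$. The block complexity $\operatorname{block}(A)$ of an integer matrix $A$ is the smallest $L\ge0$ such that $A=\sum_{i=1}^L\sigma_iB_i$ with blocky $B_i$ and signs $\sigma_i\in\{-1,1\}$. *)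

From mathcomp Require Import all_boot all_order all_algebra.
Set Implicit Arguments. Unset Strict Implicit. Unset Printing Implicit Defensive.
Import GRing.Theory Num.Theory.

(* A boolean matrix B is blocky if there are families (S_i)_i of pairwise
   disjoint subsets of X and (T_i)_i of pairwise disjoint subsets of Y
   (given as a finite list of pairs (S_i, T_i)) such that
   supp B = \bigcup_i S_i x T_i. *)
Definition blocky (X Y : finType) (B : X -> Y -> bool) : Prop :=
  exists F : seq ({set X} * {set Y}),
    (forall i j, (i < size F)%N -> (j < size F)%N -> i != j ->
        [disjoint (nth (set0, set0) F i).1 & (nth (set0, set0) F j).1]
        /\ [disjoint (nth (set0, set0) F i).2 & (nth (set0, set0) F j).2])
    /\ (forall x y, B x y = has (fun p : {set X} * {set Y} => (x \in p.1) && (y \in p.2)) F).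

Definition block_decomposable (X Y : finType) (A : X -> Y -> int) (L : nat) : Prop :=
  exists (B : 'I_L -> X -> Y -> bool) (sigma : 'I_L -> bool),
    (forall i, blocky (B i)) /\
    (forall x y, A x y = (\sum_(i < L) (-1) ^+ sigma i * (B i x y)%:Z)%R).

(* block(A) <= N  (block(A) is the least L with a decomposition). *)
Definition block_le (X Y : finType) (A : X -> Y -> int) (N : nat) : Prop :=
  exists L, (L <= N)%N /\ block_decomposable A L.

Definition max_row_l1 (X Y : finType) (A : X -> Y -> int) : nat :=
  \max_(x : X) \sum_(y : Y) `|A x y|%N.

(* Split A into its positive and negative parts; it suffices to write a
   nonnegative matrix P whose row sums are at most M as a sum of M blocky
   matrices.  List the columns of row x with multiplicity, the column y
   occurring P x y times; the k-th layer has a single 1 in row x, at the k-th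
   column of that list.  A boolean matrix with at most one 1 per row is
   blocky: take the blocks {x | B x y} x {y}. *)
From mathcomp Require Import all_boot all_order all_algebra.
Import GRing.Theory Num.Theory.

Set Implicit Arguments.
Unset Strict Implicit.
Unset Printing Implicit Defensive.

Lemma blocky_row_uniq (X Y : finType) (B : X -> Y -> bool) :
  (forall x y y', B x y -> B x y' -> y = y') -> blocky B.
Proof.
move=> B_uniq.
exists [seq ([set x | B x z], [set z]) | z <- enum Y]; split.
  move=> i j; rewrite size_map => lt_i lt_j neq_ij.
  have y0 : Y by move: lt_i; case: (enum Y) => [|a l] // _; exact: a.
  rewrite !(nth_map y0) -?enumT //.
  have : nth y0 (enum Y) i != nth y0 (enum Y) j by rewrite nth_uniq ?enum_uniq.
  set a := nth y0 _ i; set b := nth y0 _ j => /eqP neq_ab.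
  split; apply/pred0P => x /=; rewrite !inE; apply/negP.
    by case/andP=> Ba Bb; apply: neq_ab; exact: B_uniq Ba Bb.
  by case/andP=> /eqP-> /eqP.
move=> x y; rewrite has_map; apply/idP/hasP => [Bxy | [z _]].
  by exists y; rewrite ?mem_enum //= !inE eqxx andbT.
by rewrite /= !inE => /andP[Bxz /eqP->].
Qed.

Section NatLayers.

Variables (X Y : finType) (P : X -> Y -> nat).

Definition row_multiset (x : X) : seq Y :=
  flatten [seq nseq (P x z) z | z <- enum Y].

Lemma count_row_multiset x (a : pred Y) :
  count a (row_multiset x) = \sum_(z | a z) P x z.
Proof.
rewrite count_flatten -map_comp sumnE big_map big_enum [RHS]big_mkcond /=.
by apply: eq_bigr => z _; rewrite count_nseq; case: (a z); rewrite ?mul1n.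
Qed.

Definition layer (k : nat) (x : X) (y : Y) : bool :=
  (k < size (row_multiset x)) && (nth y (row_multiset x) k == y).

Lemma blocky_layer k : blocky (layer k).
Proof.
apply: blocky_row_uniq => x y y' /andP[lt_k /eqP <-] /andP[_ /eqP <-].
exact: set_nth_default.
Qed.

Lemma sum_layers (M : nat) x y :
  \sum_y' P x y' <= M -> \sum_(k < M) layer k x y = P x y.
Proof.
move=> row_le; rewrite /layer; set s := row_multiset x.
have size_s : size s <= M by rewrite -count_predT count_row_multiset.
have -> : P x y = count (pred1 y) s by rewrite count_row_multiset big_pred1_eq.
rewrite -(big_mkord xpredT (fun k => ((k < size s) && (nth y s k == y)) : nat)).
rewrite (big_cat_nat _ size_s) //= [X in _ + X]big1_seq ?addn0; last first.
  by move=> k /andP[_]; rewrite mem_index_iota => /andP[/leq_gtF->].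
rewrite -sum1_count big_mkcond (big_nth y) /= big_nat_cond [RHS]big_nat_cond.
rewrite [RHS]big_mkcondr; apply: eq_big => [k | k /andP[/andP[_ ->] _]].
  by rewrite andbT.
by case: eqP.
Qed.

Lemma block_decomposable_signed (M : nat) :
  (forall x, \sum_y P x y <= M) -> forall b : bool,
  block_decomposable (fun x y => (-1) ^+ b * (P x y)%:Z)%R M.
Proof.
move=> row_le b; exists (fun k : 'I_M => layer k), (fun => b).
split=> [k | x y]; first exact: blocky_layer.
by rewrite -mulr_sumr -(big_morph Posz PoszD (erefl _)) sum_layers.
Qed.

End NatLayers.

Lemma block_decomposableD (X Y : finType) (A1 A2 : X -> Y -> int) L1 L2 :
  block_decomposable A1 L1 -> block_decomposable A2 L2 ->
  block_decomposable (fun x y => A1 x y + A2 x y)%R (L1 + L2).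
Proof.
move=> [B1 [s1 [blocky1 E1]]] [B2 [s2 [blocky2 E2]]].
exists (fun k => match split k with inl i => B1 i | inr j => B2 j end).
exists (fun k => match split k with inl i => s1 i | inr j => s2 j end).
split=> [k | x y]; first by case: (split k).
rewrite big_split_ord E1 E2; congr (_ + _)%R.
  by apply: eq_bigr => i _; rewrite (unsplitK (inl i)).
by apply: eq_bigr => j _; rewrite (unsplitK (inr j)).
Qed.

Lemma int_pos_neg_split (a : int) :
  a = ((if 0 <= a then `|a|%N else 0%N)%:Z
       - (if a < 0 then `|a|%N else 0%N)%:Z)%R.
Proof.
case: (lerP 0 a) => [a_ge0 | a_lt0]; first by rewrite subr0 gez0_abs.
by rewrite sub0r ltz0_abs ?opprK.
Qed.

Theorem lemma4p1 (X Y : finType) (A : X -> Y -> int) :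
  ((forall x y, (0 <= A x y)%R) -> block_le A (max_row_l1 A))
  /\ block_le A (2 * max_row_l1 A).
Proof.
set M := max_row_l1 A.
have row_le x : \sum_y `|A x y|%N <= M.
  exact: (leq_bigmax (F := fun x => \sum_y `|A x y|%N)).
split=> [A_ge0 | ].
  have [B [s [blockyB E]]] := block_decomposable_signed row_le false.
  exists M; split=> //; exists B, s; split=> // x y.
  by rewrite -E expr0 mul1r gez0_abs.
pose pos x y := if (0 <= A x y)%R then `|A x y|%N else 0%N.
pose neg x y := if (A x y < 0)%R then `|A x y|%N else 0%N.
have pos_le x : \sum_y pos x y <= M.
  by apply: leq_trans (row_le x); apply: leq_sum => y _; rewrite /pos; case: ifP.
have neg_le x : \sum_y neg x y <= M.
  by apply: leq_trans (row_le x); apply: leq_sum => y _; rewrite /neg; case: ifP.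
have [B [s [blockyB E]]] := block_decomposableD
  (block_decomposable_signed pos_le false) (block_decomposable_signed neg_le true).
exists (M + M); split; first by rewrite mul2n addnn.
by exists B, s; split=> // x y; rewrite -E expr0 expr1 mul1r mulN1r -int_pos_neg_split.
Qed.
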